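(* The functions $Z_{ij}^{k+1,l+1}(x,y)$ for $i=-k,\dots,g-1$, $j=-l,\dots,h-1$, together with $Z_i^{k+1}(x,y)$ for $i=-k,\dots,g-1$ and $Z_j^{l+1}(x,y)$ for $j=-l,\dots,h-1$, form a basis of the vector space $\mathcal Z_{kl}^{\Delta\lambda,\Delta\mu}(\Omega)$. In particular $$\dim \mathcal Z_{kl}^{\Delta\lambda,\Delta\mu}(\Omega)=(g+k+1)(h+l+1)-1=(g+k)(h+l)+g+k+h+l.$$
   Context: Let $\Omega=[a,b]\times[c,d]\subset\mathbb R^2$ with $a<b$, $c<d$. Fix integers $g,h\ge 0$ and degrees $k,l\in\mathbb N_0$. Take knots $a=\lambda_0<\lambda_1<\dots<\lambda_g<\lambda_{g+1}=b$ and $c=\mu_0<\mu_1<\dots<\mu_h<\mu_{h+1}=d$, extended by coincident boundary knots $\lambda_{-k}=\dots=\lambda_0=a$, $\lambda_{g+1}=\dots=\lambda_{g+k+1}=b$, and $\mu_{-l}=\dots=\mu_0=c$, $\mu_{h+1}=\dots=\mu_{h+l+1}=d$. For $i=-k,\dots,g$ let $B_i^{k+1}(x)$ denote the (normalized) B-spline of degree $k$ with knots $\lambda_i,\dots,\lambda_{i+k+1}$, so that $\sum_{i=-k}^g B_i^{k+1}(x)=1$ on $[a,b]$; similarly $B_j^{l+1}(y)$, $j=-l,\dots,h$, is the B-spline of degree $l$ with knots $\mu_j,\dots,\mu_{j+l+1}$. Let $\mathcal S_{kl}^{\Delta\lambda,\Delta\mu}(\Omega)$ be the space of tensor product splines on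 $\Omega$ of degree $k$ in $x$ (knots $\lambda$) and degree $l$ in $y$ (knots $\mu$), i.e. the span of the functions $B_i^{k+1}(x)B_j^{l+1}(y)$, which has dimension $(g+k+1)(h+l+1)$. Define $\mathcal Z_{kl}^{\Delta\lambda,\Delta\mu}(\Omega)=\{s\in\mathcal S_{kl}^{\Delta\lambda,\Delta\mu}(\Omega):\iint_\Omega s(x,y)\,dx\,dy=0\}$. The univariate ZB-splines are, for $i=-k,\dots,g-1$, $$Z_i^{k+1}(x)=(k+1)\Big(\frac{B_i^{k+1}(x)}{\lambda_{i+k+1}-\lambda_i}-\frac{B_{i+1}^{k+1}(x)}{\lambda_{i+k+2}-\lambda_{i+1}}\Big)$$ (equivalently, the derivative of the degree-$(k+1)$ B-spline with knots $\lambda_i,\dots,\lambda_{i+k+2}$), and analogously $Z_j^{l+1}(y)=(l+1)\big(\frac{B_j^{l+1}(y)}{\mu_{j+l+1}-\mu_j}-\frac{B_{j+1}^{l+1}(y)}{\mu_{j+l+2}-\mu_{j+1}}\big)$ for $j=-l,\dots,h-1$. The bivariate ZB-splines are $Z_{ij}^{k+1,l+1}(x,y)=Z_i^{k+1}(x)Z_j^{l+1}(y)$, $Z_i^{k+1}(x,y)=Z_i^{k+1}(x)$ and $Z_j^{l+1}(x,y)=Z_j^{l+1}(y)$, all regarded as functions on $\Omega$. *)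

From Stdlib Require Import Reals ZArith List.
From Coquelicot Require Import Coquelicot.
Open Scope R_scope.

(* zsum m n f = f m + f (m+1) + ... + f n  (0 if n < m). *)
Definition zsum (m n : Z) (f : Z -> R) : R :=
  fold_right Rplus 0
    (map (fun p => f (m + Z.of_nat p)%Z) (seq 0 (Z.to_nat (n - m + 1)))).

(* Normalized B-spline of degree p with knots t i, ..., t (i+p+1) (Cox-de Boor),
   with the convention 0/0 := 0.  Degree 0: indicator of [t i, t (i+1)),
   except that the last nondegenerate interval [t i, e] (with t (i+1) = e,
   e the right end point of the domain) is closed on the right, so that
   the B-splines form a partition of unity on the whole closed interval. *)
Fixpoint bspline (t : Z -> R) (e : R) (p : nat) (i : Z) (x : R) : R :=
  match p with
  | O =>
      if Rle_dec (t i) x then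
        if Rlt_dec x (t (i + 1)%Z) then 1
        else if Req_EM_T x e then
               if Req_EM_T (t (i + 1)%Z) e then
                 if Rlt_dec (t i) (t (i + 1)%Z) then 1 else 0
               else 0
             else 0
      else 0
  | S q =>
      (if Req_EM_T (t (i + Z.of_nat p)%Z) (t i) then 0
       else (x - t i) / (t (i + Z.of_nat p)%Z - t i)) * bspline t e q i x
      + (if Req_EM_T (t (i + Z.of_nat p + 1)%Z) (t (i + 1)%Z) then 0
         else (t (i + Z.of_nat p + 1)%Z - x) / (t (i + Z.of_nat p + 1)%Z - t (i + 1)%Z))
        * bspline t e q (i + 1)%Z x
  end.

Definition zbspline (t : Z -> R) (e : R) (k : nat) (i : Z) (x : R) : R :=
  INR (k + 1) * (bspline t e k i x / (t (i + Z.of_nat k + 1)%Z - t i)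
                 - bspline t e k (i + 1)%Z x / (t (i + Z.of_nat k + 2)%Z - t (i + 1)%Z)).

Definition knots (t : Z -> R) (a b : R) (g k : nat) : Prop :=
  (forall i : Z, (- Z.of_nat k <= i <= 0)%Z -> t i = a) /\
  (forall i : Z, (Z.of_nat g + 1 <= i <= Z.of_nat g + Z.of_nat k + 1)%Z -> t i = b) /\
  (forall i : Z, (0 <= i <= Z.of_nat g)%Z -> t i < t (i + 1)%Z).

Definition in_Omega (a b c d x y : R) : Prop := a <= x <= b /\ c <= y <= d.

Definition in_S (lam mu : Z -> R) (a b c d : R) (g h k l : nat) (s : R -> R -> R) : Prop :=
  exists coef : Z -> Z -> R,
    forall x y, in_Omega a b c d x y ->
      s x y = zsum (- Z.of_nat k) (Z.of_nat g) (fun i =>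
                zsum (- Z.of_nat l) (Z.of_nat h) (fun j =>
                  coef i j * bspline lam b k i x * bspline mu d l j y)).

Definition dint (a b c d : R) (s : R -> R -> R) : R :=
  RInt (fun x => RInt (fun y => s x y) c d) a b.

Definition in_Zsp (lam mu : Z -> R) (a b c d : R) (g h k l : nat) (s : R -> R -> R) : Prop :=
  in_S lam mu a b c d g h k l s /\ dint a b c d s = 0.

Definition zcomb (lam mu : Z -> R) (b d : R) (g h k l : nat)
  (al : Z -> Z -> R) (be : Z -> R) (ga : Z -> R) (x y : R) : R :=
  zsum (- Z.of_nat k) (Z.of_nat g - 1) (fun i =>
    zsum (- Z.of_nat l) (Z.of_nat h - 1) (fun j =>
      al i j * (zbspline lam b k i x * zbspline mu d l j y)))
  + zsum (- Z.of_nat k) (Z.of_nat g - 1) (fun i => be i * zbspline lam b k i x)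
  + zsum (- Z.of_nat l) (Z.of_nat h - 1) (fun j => ga j * zbspline mu d l j y).

(* Everything reduces to univariate facts about the degree-k B-splines B_i on [a, b].  On each
   knot interval they are polynomials, they form a partition of unity, and they are linearly
   independent: by induction on the degree, since differentiating sum_i e_i B_i^{p+1} on a knot
   interval gives (p+1) sum_i (e_i - e_{i-1}) B_i^p / (t_{i+p+1} - t_i).  The ZB-spline Z_i is
   the derivative of a degree-(k+1) B-spline, so it integrates to zero over [a, b], and
   sum_i c_i Z_i = sum_i (c_i - c_{i-1}) w_i B_i with positive weights w_i.  Hence 1, Z_{-k}, ...,
   Z_{g-1} are linearly independent, and by telescoping and the partition of unity they span the
   univariate spline space.  Taking tensor products, every bivariate spline is a constant plus a
   combination of the proposed basis functions; the constant vanishes when the integral does,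
   because all the basis functions integrate to zero.  Independence in two variables follows by
   applying the univariate statement first in y and then in x. *)

From Stdlib Require Import Reals ZArith List Lia Lra FunctionalExtensionality.
From Coquelicot Require Import Coquelicot.
Open Scope R_scope.
Set Bullet Behavior "Strict Subproofs".

(** * Finite sums over integer ranges *)

Definition sumN (N : nat) (F : nat -> R) : R := fold_right Rplus 0 (map F (seq 0 N)).

Lemma sumN_S (N : nat) (F : nat -> R) : sumN (S N) F = sumN N F + F N.
Proof.
  unfold sumN. rewrite seq_S, map_app, fold_right_app. simpl.
  induction (map F (seq 0 N)); simpl; lra.
Qed.

Lemma sumN_first (N : nat) (F : nat -> R) : sumN (S N) F = F O + sumN N (fun p => F (S p)).
Proof.
  induction N as [|N IH]; [unfold sumN; simpl; lra|].
  rewrite sumN_S, IH, sumN_S. lra.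
Qed.

Lemma zsum_sumN (m n : Z) (f : Z -> R) :
  zsum m n f = sumN (Z.to_nat (n - m + 1)) (fun p => f (m + Z.of_nat p)%Z).
Proof. reflexivity. Qed.

Lemma zsum_closed {A : Type} (Q : (A -> R) -> R -> Prop) (F : Z -> A -> R) (v : Z -> R) (m n : Z) :
  Q (fun _ => 0) 0 ->
  (forall f f' u u', Q f u -> Q f' u' -> Q (fun x => f x + f' x) (u + u')) ->
  (forall i, (m <= i <= n)%Z -> Q (F i) (v i)) ->
  Q (fun x => zsum m n (fun i => F i x)) (zsum m n v).
Proof.
  intros Q0 Qadd QF.
  assert (QN : forall N, (N <= Z.to_nat (n - m + 1))%nat ->
    Q (fun x => sumN N (fun p => F (m + Z.of_nat p)%Z x)) (sumN N (fun p => v (m + Z.of_nat p)%Z))).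
  { induction N as [|N IH]; intros HN; [exact Q0|].
    replace (fun x => sumN (S N) (fun p => F (m + Z.of_nat p)%Z x))
      with (fun x => sumN N (fun p => F (m + Z.of_nat p)%Z x) + F (m + Z.of_nat N)%Z x)
      by (apply functional_extensionality; intros; symmetry; apply sumN_S).
    rewrite sumN_S. apply Qadd; [apply IH; lia | apply QF; lia]. }
  exact (QN _ (le_n _)).
Qed.

Lemma zsum_ext (m n : Z) (f f' : Z -> R) :
  (forall i, (m <= i <= n)%Z -> f i = f' i) -> zsum m n f = zsum m n f'.
Proof.
  intros H. rewrite !zsum_sumN. unfold sumN. f_equal. apply map_ext_in.
  intros p Hp. apply in_seq in Hp. apply H. lia.
Qed.

Lemma zsum_plus (m n : Z) (f f' : Z -> R) : zsum m n (fun i => f i + f' i) = zsum m n f + zsum m n f'.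
Proof.
  rewrite !zsum_sumN. induction (Z.to_nat (n - m + 1)) as [|N IH]; [unfold sumN; simpl; lra|].
  rewrite !sumN_S, IH. lra.
Qed.

Lemma zsum_scal (m n : Z) (c : R) (f : Z -> R) : zsum m n (fun i => c * f i) = c * zsum m n f.
Proof.
  rewrite !zsum_sumN. induction (Z.to_nat (n - m + 1)) as [|N IH]; [unfold sumN; simpl; lra|].
  rewrite !sumN_S, IH. lra.
Qed.

Lemma zsum_scal_r (m n : Z) (c : R) (f : Z -> R) : zsum m n (fun i => f i * c) = zsum m n f * c.
Proof. rewrite Rmult_comm, <- zsum_scal. apply zsum_ext. intros; ring. Qed.

Lemma zsum_minus (m n : Z) (f f' : Z -> R) : zsum m n (fun i => f i - f' i) = zsum m n f - zsum m n f'.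
Proof.
  rewrite (zsum_ext _ _ _ (fun i => f i + -1 * f' i)) by (intros; ring).
  rewrite zsum_plus, zsum_scal. ring.
Qed.

Lemma zsum_lincomb (m n : Z) (s : R) (f f' w : Z -> R) :
  zsum m n (fun i => (s * f i + f' i) * w i)
  = s * zsum m n (fun i => f i * w i) + zsum m n (fun i => f' i * w i).
Proof. rewrite <- zsum_scal, <- zsum_plus. apply zsum_ext. intros; ring. Qed.

Lemma zsum_zero (m n : Z) : zsum m n (fun _ => 0) = 0.
Proof. rewrite (zsum_ext _ _ _ (fun _ => 0 * 0)), zsum_scal by (intros; ring). ring. Qed.

Lemma zsum_last (m n : Z) (f : Z -> R) : (m <= n)%Z -> zsum m n f = zsum m (n - 1) f + f n.
Proof.
  intros H. rewrite !zsum_sumN.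
  replace (Z.to_nat (n - m + 1)) with (S (Z.to_nat (n - 1 - m + 1))) by lia.
  rewrite sumN_S. do 2 f_equal. lia.
Qed.

Lemma zsum_first (m n : Z) (f : Z -> R) : (m <= n)%Z -> zsum m n f = f m + zsum (m + 1) n f.
Proof.
  intros H. rewrite !zsum_sumN.
  replace (Z.to_nat (n - m + 1)) with (S (Z.to_nat (n - (m + 1) + 1))) by lia.
  rewrite sumN_first. f_equal; [f_equal; lia|].
  unfold sumN. f_equal. apply map_ext. intros p. f_equal. lia.
Qed.

Lemma zsum_shift (m n : Z) (f : Z -> R) : zsum m n (fun i => f (i + 1)%Z) = zsum (m + 1) (n + 1) f.
Proof.
  rewrite !zsum_sumN. replace (n + 1 - (m + 1) + 1)%Z with (n - m + 1)%Z by lia.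
  unfold sumN. f_equal. apply map_ext. intros p. f_equal. lia.
Qed.

Lemma zsum_shift_boundary (m n : Z) (F G : Z -> R) :
  (m <= n + 1)%Z -> F (m - 1)%Z = 0 -> G (n + 1)%Z = 0 ->
  zsum (m - 1) n (fun i => F i + G (i + 1)%Z) = zsum m n (fun i => F i + G i).
Proof.
  intros Hmn HF HG.
  rewrite !zsum_plus, zsum_shift, (zsum_first (m - 1)), (zsum_last (m - 1 + 1) (n + 1)) by lia.
  replace (m - 1 + 1)%Z with m by lia. replace (n + 1 - 1)%Z with n by lia.
  rewrite HF, HG. ring.
Qed.

Lemma zsum_delta (m n i : Z) (v : R) :
  (m <= i <= n)%Z -> zsum m n (fun j => if Z.eq_dec j i then v else 0) = v.
Proof.
  intros Hi. rewrite zsum_sumN.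
  assert (E : forall N, sumN N (fun p => if Z.eq_dec (m + Z.of_nat p) i then v else 0)
                        = if Z_lt_dec i (m + Z.of_nat N) then v else 0).
  { induction N as [|N IH]; [destruct Z_lt_dec; [lia|reflexivity]|].
    rewrite sumN_S, IH. repeat destruct Z.eq_dec; repeat destruct Z_lt_dec; lia || lra. }
  rewrite E. destruct Z_lt_dec; [reflexivity|lia].
Qed.

Lemma zsum_nonneg (m n : Z) (f : Z -> R) : (forall i, (m <= i <= n)%Z -> 0 <= f i) -> 0 <= zsum m n f.
Proof.
  apply (zsum_closed (A := unit) (fun _ u => 0 <= u) (fun _ _ => 0)); [lra|]. intros; lra.
Qed.

Lemma zsum_pos (m n : Z) (f : Z -> R) :
  (m <= n)%Z -> (forall i, (m <= i <= n)%Z -> 0 < f i) -> 0 < zsum m n f.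
Proof.
  intros H Hf. rewrite zsum_last by exact H.
  pose proof (zsum_nonneg m (n - 1) f (fun i Hi => Rlt_le _ _ (Hf i ltac:(lia)))).
  pose proof (Hf n ltac:(lia)). lra.
Qed.

Lemma zsum_swap (m n m' n' : Z) (f : Z -> Z -> R) :
  zsum m n (fun i => zsum m' n' (fun j => f i j)) = zsum m' n' (fun j => zsum m n (fun i => f i j)).
Proof.
  symmetry. apply (zsum_closed (fun u s => zsum m' n' u = s)); [apply zsum_zero| |reflexivity].
  intros u u' s s' <- <-. apply zsum_plus.
Qed.

Lemma zsum_prod (m n m' n' : Z) (u v : Z -> R) :
  zsum m n (fun i => zsum m' n' (fun j => u i * v j)) = zsum m n u * zsum m' n' v.
Proof. rewrite <- zsum_scal_r. apply zsum_ext. intros. apply zsum_scal. Qed.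

Lemma const_of_eq_pred (e : Z -> R) (lo hi : Z) :
  (forall i, (lo < i <= hi)%Z -> e i = e (i - 1)%Z) -> forall i, (lo <= i <= hi)%Z -> e i = e lo.
Proof.
  intros He i Hi. replace i with (lo + Z.of_nat (Z.to_nat (i - lo)))%Z by lia.
  assert (Hn : (Z.of_nat (Z.to_nat (i - lo)) <= hi - lo)%Z) by lia. revert Hn.
  induction (Z.to_nat (i - lo)) as [|n IH]; intros Hn; [f_equal; lia|].
  rewrite He by lia. replace (lo + Z.of_nat (S n) - 1)%Z with (lo + Z.of_nat n)%Z by lia. apply IH. lia.
Qed.

Lemma is_derive_zsum (F : Z -> R -> R) (dF : Z -> R) (m n : Z) (x : R) :
  (forall i, (m <= i <= n)%Z -> is_derive (F i) x (dF i)) ->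
  is_derive (fun y => zsum m n (fun i => F i y)) x (zsum m n dF).
Proof.
  apply (zsum_closed (fun f l => is_derive f x l)).
  - apply (is_derive_const (V := R_NormedModule)).
  - intros f f' u u' Hf Hf'. exact (is_derive_plus _ _ x _ _ Hf Hf').
Qed.

Lemma is_RInt_const_R (lo hi c : R) : is_RInt (fun _ => c) lo hi ((hi - lo) * c).
Proof. exact (is_RInt_const (V := R_NormedModule) lo hi c). Qed.

Lemma is_RInt_zsum (F : Z -> R -> R) (v : Z -> R) (m n : Z) (lo hi : R) :
  (forall i, (m <= i <= n)%Z -> is_RInt (F i) lo hi (v i)) ->
  is_RInt (fun y => zsum m n (fun i => F i y)) lo hi (zsum m n v).
Proof.
  apply (zsum_closed (fun f l => is_RInt f lo hi l)).
  - pose proof (is_RInt_const_R lo hi 0) as C. rewrite Rmult_0_r in C. exact C.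
  - intros f f' u u' Hf Hf'. exact (is_RInt_plus _ _ _ _ _ _ Hf Hf').
Qed.

Lemma is_derive_zero_on_interval (f : R -> R) (lo hi x l : R) :
  (forall y, lo < y < hi -> f y = 0) -> lo < x < hi -> is_derive f x l -> l = 0.
Proof.
  intros Hf Hx Hd.
  assert (H0 : is_derive f x 0).
  { apply (is_derive_ext_loc (fun _ => 0)); [|apply (is_derive_const (V := R_NormedModule))].
    apply (locally_interval _ x lo hi); simpl; try lra.
    intros y H1 H2. symmetry. apply Hf. simpl in *. lra. }
  apply is_derive_unique in Hd. apply is_derive_unique in H0. congruence.
Qed.

Lemma const_eq_0_of_is_RInt_0 (f : R -> R) (a b c0 : R) : a < b -> is_RInt f a b 0 ->
  (forall x, a <= x <= b -> f x + c0 = 0) -> c0 = 0.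
Proof.
  intros Hab If H.
  pose proof (is_RInt_plus (V := R_NormedModule) _ _ a b _ _ If (is_RInt_const_R a b c0)) as I.
  apply (is_RInt_ext _ (fun _ => 0)) in I; [|rewrite Rmin_left, Rmax_right by lra; intros x Hx; apply H; lra].
  pose proof (is_RInt_const_R a b 0) as I0.
  apply (is_RInt_unique (V := R_CompleteNormedModule)) in I, I0. rewrite I in I0.
  unfold plus in I0. simpl in I0.
  assert (E : (b - a) * c0 = 0) by lra. apply Rmult_integral in E as [E|E]; lra.
Qed.

(** * B-splines on a knot sequence *)

Definition inv_gap (t : Z -> R) (i j : Z) : R :=
  if Req_EM_T (t j) (t i) then 0 else / (t j - t i).

Lemma inv_gap_eq (t : Z -> R) (i j : Z) : t j = t i -> inv_gap t i j = 0.
Proof. intros H. unfold inv_gap. destruct Req_EM_T; [reflexivity|contradiction]. Qed.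

Lemma inv_gap_cancel (t : Z -> R) (i j : Z) : t j <> t i -> (t j - t i) * inv_gap t i j = 1.
Proof. intros H. unfold inv_gap. destruct Req_EM_T; [contradiction|]. field. lra. Qed.

Lemma bspline_S (t : Z -> R) (e : R) (q : nat) (i : Z) (x : R) : bspline t e (S q) i x =
  (x - t i) * inv_gap t i (i + Z.of_nat (S q)) * bspline t e q i x
  + (t (i + Z.of_nat (S q) + 1)%Z - x) * inv_gap t (i + 1) (i + Z.of_nat (S q) + 1)
    * bspline t e q (i + 1) x.
Proof. cbn [bspline]. unfold inv_gap. destruct Req_EM_T, Req_EM_T; field; lra. Qed.

Lemma bspline_ext (t t' : Z -> R) (e : R) (p : nat) (i : Z) (x : R) :
  (forall j, (i <= j <= i + Z.of_nat p + 1)%Z -> t j = t' j) -> bspline t e p i x = bspline t' e p i x.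
Proof.
  revert i. induction p as [|p IH]; intros i H.
  - cbn [bspline]. rewrite !H by lia. reflexivity.
  - rewrite !bspline_S, (IH i), (IH (i + 1)%Z) by (intros; apply H; lia).
    unfold inv_gap. rewrite !H by lia. reflexivity.
Qed.

(* The polynomial piece of [bspline t b p i] on the knot interval [t m, t (m+1)]. *)
Fixpoint bpiece (t : Z -> R) (m : Z) (p : nat) (i : Z) (x : R) : R :=
  match p with
  | O => if Z.eq_dec i m then 1 else 0
  | S q =>
      (x - t i) * inv_gap t i (i + Z.of_nat p) * bpiece t m q i x
      + (t (i + Z.of_nat p + 1)%Z - x) * inv_gap t (i + 1) (i + Z.of_nat p + 1) * bpiece t m q (i + 1) x
  end.

Lemma bpiece_S (t : Z -> R) (m : Z) (q : nat) (i : Z) (x : R) : bpiece t m (S q) i x =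
  (x - t i) * inv_gap t i (i + Z.of_nat (S q)) * bpiece t m q i x
  + (t (i + Z.of_nat (S q) + 1)%Z - x) * inv_gap t (i + 1) (i + Z.of_nat (S q) + 1)
    * bpiece t m q (i + 1) x.
Proof. reflexivity. Qed.

Definition dbpiece (t : Z -> R) (m : Z) (p : nat) (i : Z) (x : R) : R :=
  match p with
  | O => 0
  | S q => INR p * (inv_gap t i (i + Z.of_nat p) * bpiece t m q i x
                    - inv_gap t (i + 1) (i + Z.of_nat p + 1) * bpiece t m q (i + 1) x)
  end.

Lemma dbpiece_S (t : Z -> R) (m : Z) (q : nat) (i : Z) (x : R) : dbpiece t m (S q) i x =
  INR (S q) * (inv_gap t i (i + Z.of_nat (S q)) * bpiece t m q i x
               - inv_gap t (i + 1) (i + Z.of_nat (S q) + 1) * bpiece t m q (i + 1) x).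
Proof. reflexivity. Qed.

Definition knot_seq (t : Z -> R) (a b : R) (g : nat) : Prop :=
  (forall i, (i <= 0)%Z -> t i = a) /\ (forall i, (Z.of_nat g + 1 <= i)%Z -> t i = b) /\
  (forall i, (0 <= i <= Z.of_nat g)%Z -> t i < t (i + 1)%Z).

Section KnotSequence.

Variables (t : Z -> R) (a b : R) (g : nat).
Hypothesis Ht : knot_seq t a b g.

Lemma knot_left i : (i <= 0)%Z -> t i = a.
Proof. apply Ht. Qed.

Lemma knot_right i : (Z.of_nat g + 1 <= i)%Z -> t i = b.
Proof. apply Ht. Qed.

Lemma knot_interior_lt i : (0 <= i <= Z.of_nat g)%Z -> t i < t (i + 1)%Z.
Proof. apply Ht. Qed.

Lemma knot_step i : t i <= t (i + 1)%Z.
Proof.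
  destruct (Z_lt_le_dec i 0); [rewrite !knot_left by lia; lra|].
  destruct (Z_le_gt_dec i (Z.of_nat g)); [pose proof (knot_interior_lt i ltac:(lia)); lra|].
  rewrite !knot_right by lia. lra.
Qed.

Lemma knot_le i j : (i <= j)%Z -> t i <= t j.
Proof.
  intros Hij. replace j with (i + Z.of_nat (Z.to_nat (j - i)))%Z by lia.
  induction (Z.to_nat (j - i)) as [|n IH]; [rewrite Z.add_0_r; lra|].
  replace (i + Z.of_nat (S n))%Z with (i + Z.of_nat n + 1)%Z by lia.
  pose proof (knot_step (i + Z.of_nat n)). lra.
Qed.

Lemma knot_lt i j i' : (0 <= j <= Z.of_nat g)%Z -> (i <= j)%Z -> (j < i')%Z -> t i < t i'.
Proof.
  intros Hj Hij Hji. pose proof (knot_le i j Hij). pose proof (knot_le (j + 1) i' ltac:(lia)).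
  pose proof (knot_interior_lt j Hj). lra.
Qed.

Lemma knot_bounds i : a <= t i <= b.
Proof.
  rewrite <- (knot_left (Z.min i 0)), <- (knot_right (Z.max i (Z.of_nat g + 1))) by lia.
  split; apply knot_le; lia.
Qed.

Lemma knot_ends_lt : a < b.
Proof.
  rewrite <- (knot_left 0), <- (knot_right (Z.of_nat g + 1)) by lia.
  apply (knot_lt 0 0); lia.
Qed.

Definition in_piece (m : Z) (x : R) : Prop :=
  t m <= x < t (m + 1)%Z \/ (m = Z.of_nat g /\ x = b).

Lemma exists_piece x : a <= x <= b -> exists m, (0 <= m <= Z.of_nat g)%Z /\ in_piece m x.
Proof.
  intros Hx. destruct (Req_dec x b) as [->|Hxb]; [exists (Z.of_nat g); split; [lia|now right]|].
  assert (E : forall n, (n <= g)%nat -> x < t (Z.of_nat n + 1)%Z ->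
                exists m, (0 <= m <= Z.of_nat n)%Z /\ t m <= x < t (m + 1)%Z).
  { induction n as [|n IH]; intros Hn Hlt.
    - exists 0%Z. rewrite knot_left by lia. simpl in Hlt |- *. split; [lia|lra].
    - destruct (Rlt_le_dec x (t (Z.of_nat n + 1)%Z)) as [Hl|Hl].
      + destruct (IH ltac:(lia) Hl) as [m [Hm Hmx]]. exists m. split; [lia|exact Hmx].
      + exists (Z.of_nat n + 1)%Z. replace (Z.of_nat n + 1 + 1)%Z with (Z.of_nat (S n) + 1)%Z by lia.
        split; [lia|lra]. }
  destruct (E g (le_n g)) as [m [Hm Hmx]]; [rewrite knot_right by lia; lra|].
  exists m. split; [lia|now left].
Qed.

Local Ltac case_ifs := repeat (destruct Rle_dec || destruct Rlt_dec || destruct Req_EM_T).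

Lemma bspline0_in_piece m i x : (0 <= m <= Z.of_nat g)%Z -> in_piece m x ->
  bspline t b 0 i x = if Z.eq_dec i m then 1 else 0.
Proof.
  intros Hm Hx. cbn [bspline]. pose proof (knot_bounds (m + 1)).
  destruct (Z.eq_dec i m) as [->|Him]; destruct Hx as [Hx|[-> ->]].
  - case_ifs; lra.
  - pose proof (knot_interior_lt (Z.of_nat g) ltac:(lia)).
    rewrite (knot_right (Z.of_nat g + 1)) in * by lia. case_ifs; lra.
  - destruct (Z_lt_le_dec i m).
    + pose proof (knot_le (i + 1) m ltac:(lia)). case_ifs; lra.
    + pose proof (knot_le (m + 1) i ltac:(lia)). case_ifs; lra.
  - destruct (Z_lt_le_dec i (Z.of_nat g)).
    + pose proof (knot_lt (i + 1) (Z.of_nat g) (Z.of_nat g + 1) ltac:(lia) ltac:(lia) ltac:(lia)).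
      rewrite (knot_right (Z.of_nat g + 1)) in * by lia. case_ifs; lra.
    + rewrite (knot_right i), (knot_right (i + 1)) by lia. case_ifs; lra.
Qed.

Lemma bspline_eq_bpiece m p i x : (0 <= m <= Z.of_nat g)%Z -> in_piece m x ->
  bspline t b p i x = bpiece t m p i x.
Proof.
  intros Hm Hx. revert i. induction p as [|p IH]; intros i.
  - apply bspline0_in_piece; assumption.
  - rewrite bspline_S, bpiece_S, !IH. reflexivity.
Qed.

Lemma bpiece_degenerate m p i x : (0 <= m <= Z.of_nat g)%Z ->
  t i = t (i + Z.of_nat p + 1)%Z -> bpiece t m p i x = 0.
Proof.
  intros Hm. revert i. induction p as [|p IH]; intros i Heq.
  - cbn [bpiece]. destruct Z.eq_dec as [->|]; [|reflexivity].
    pose proof (knot_interior_lt m Hm). rewrite Z.add_0_r in Heq. lra.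
  - pose proof (knot_le i (i + 1) ltac:(lia)).
    pose proof (knot_le (i + 1) (i + Z.of_nat p + 1) ltac:(lia)).
    pose proof (knot_le (i + Z.of_nat p + 1) (i + Z.of_nat (S p) + 1) ltac:(lia)).
    rewrite bpiece_S, (IH i), (IH (i + 1)%Z)
      by (try replace (i + 1 + Z.of_nat p + 1)%Z with (i + Z.of_nat (S p) + 1)%Z by lia; lra).
    ring.
Qed.

Lemma bpiece_partition_unity m p x : (0 <= m <= Z.of_nat g)%Z ->
  zsum (- Z.of_nat p) (Z.of_nat g) (fun i => bpiece t m p i x) = 1.
Proof.
  intros Hm. induction p as [|p IH]; [apply zsum_delta; lia|].
  rewrite <- IH. replace (- Z.of_nat (S p))%Z with (- Z.of_nat p - 1)%Z by lia.
  set (w i := inv_gap t i (i + Z.of_nat (S p))).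
  pose (F i := (x - t i) * w i * bpiece t m p i x).
  pose (G j := (t (j + Z.of_nat (S p))%Z - x) * w j * bpiece t m p j x).
  transitivity (zsum (- Z.of_nat p - 1) (Z.of_nat g) (fun i => F i + G (i + 1)%Z)).
  { apply zsum_ext. intros i _. rewrite bpiece_S. unfold F, G, w.
    replace (i + 1 + Z.of_nat (S p))%Z with (i + Z.of_nat (S p) + 1)%Z by lia. reflexivity. }
  rewrite zsum_shift_boundary.
  - apply zsum_ext. intros i _. unfold F, G, w.
    destruct (Req_dec (t (i + Z.of_nat (S p))%Z) (t i)) as [E|E].
    + rewrite (bpiece_degenerate m p i) by (try assumption; rewrite <- E; f_equal; lia). ring.
    + transitivity ((t (i + Z.of_nat (S p))%Z - t i) * inv_gap t i (i + Z.of_nat (S p)) * bpiece t m p i x);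
        [ring | rewrite inv_gap_cancel by exact E; ring].
  - lia.
  - unfold F. rewrite bpiece_degenerate by (assumption || (rewrite !knot_left by lia; reflexivity)). ring.
  - unfold G. rewrite bpiece_degenerate by (assumption || (rewrite !knot_right by lia; reflexivity)). ring.
Qed.

Lemma dbpiece_cox_de_boor m r i x :
  (x - t i) * inv_gap t i (i + Z.of_nat (S (S r))) * dbpiece t m (S r) i x
  + (t (i + Z.of_nat (S (S r)) + 1)%Z - x) * inv_gap t (i + 1) (i + Z.of_nat (S (S r)) + 1)
    * dbpiece t m (S r) (i + 1) x
  = INR (S r) * (inv_gap t i (i + Z.of_nat (S (S r))) * bpiece t m (S r) i x
                 - inv_gap t (i + 1) (i + Z.of_nat (S (S r)) + 1) * bpiece t m (S r) (i + 1) x).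
Proof.
  rewrite !dbpiece_S, !bpiece_S.
  replace (i + Z.of_nat (S (S r)))%Z with (i + Z.of_nat r + 2)%Z by lia.
  replace (i + Z.of_nat (S r))%Z with (i + Z.of_nat r + 1)%Z by lia.
  replace (i + 1 + Z.of_nat (S r))%Z with (i + Z.of_nat r + 2)%Z by lia.
  replace (i + Z.of_nat r + 1 + 1)%Z with (i + Z.of_nat r + 2)%Z by lia.
  replace (i + Z.of_nat r + 2 + 1)%Z with (i + Z.of_nat r + 3)%Z by lia.
  replace (i + 1 + 1)%Z with (i + 2)%Z by lia.
  set (A := inv_gap t i (i + Z.of_nat r + 2)).
  set (B := inv_gap t (i + 1) (i + Z.of_nat r + 3)).
  set (G := inv_gap t (i + 1) (i + Z.of_nat r + 2)).
  (* the two outer knot spans contain the inner one, so A and B are exact inverses when G <> 0 *)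
  assert (Hmid : G * ((t (i + Z.of_nat r + 2)%Z - t i) * A
                      - (t (i + Z.of_nat r + 3)%Z - t (i + 1)%Z) * B) = 0).
  { destruct (Req_dec (t (i + Z.of_nat r + 2)%Z) (t (i + 1)%Z)) as [E|E];
      [unfold G; rewrite inv_gap_eq by exact E; ring|].
    pose proof (knot_le i (i + 1) ltac:(lia)).
    pose proof (knot_le (i + 1) (i + Z.of_nat r + 2) ltac:(lia)).
    pose proof (knot_le (i + Z.of_nat r + 2) (i + Z.of_nat r + 3) ltac:(lia)).
    unfold A, B. rewrite !inv_gap_cancel by lra. ring. }
  match goal with |- ?L = ?R =>
    assert (L - R = - (INR (S r) * bpiece t m r (i + 1) x)
                    * (G * ((t (i + Z.of_nat r + 2)%Z - t i) * A
                            - (t (i + Z.of_nat r + 3)%Z - t (i + 1)%Z) * B))) by ring end.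
  rewrite Hmid in H. lra.
Qed.

Lemma bpiece_derive m p i x : is_derive (bpiece t m p i) x (dbpiece t m p i x).
Proof.
  revert i x. induction p as [|p IH]; intros i x; [apply (is_derive_const (V := R_NormedModule))|].
  set (A := inv_gap t i (i + Z.of_nat (S p))).
  set (B := inv_gap t (i + 1) (i + Z.of_nat (S p) + 1)).
  set (T := t (i + Z.of_nat (S p) + 1)%Z).
  apply (is_derive_ext (fun y => (y - t i) * A * bpiece t m p i y + (T - y) * B * bpiece t m p (i + 1) y));
    [intros y; symmetry; apply bpiece_S|].
  replace (dbpiece t m (S p) i x) with
    (A * bpiece t m p i x + (x - t i) * A * dbpiece t m p i x
     + (- B * bpiece t m p (i + 1) x + (T - x) * B * dbpiece t m p (i + 1) x)).
  - pose proof (Derive.is_derive_mult (fun y => (y - t i) * A) _ x A _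
                  ltac:(auto_derive; auto; ring) (IH i x)) as D1.
    pose proof (Derive.is_derive_mult (fun y => (T - y) * B) _ x (- B) _
                  ltac:(auto_derive; auto; ring) (IH (i + 1)%Z x)) as D2.
    exact (is_derive_plus _ _ x _ _ D1 D2).
  - destruct p as [|r].
    + rewrite dbpiece_S. fold A B. cbn [dbpiece INR]. ring.
    + pose proof (dbpiece_cox_de_boor m r i x) as KI. fold A B T in KI.
      rewrite (dbpiece_S t m (S r)). fold A B. rewrite (S_INR (S r)).
      transitivity (A * bpiece t m (S r) i x - B * bpiece t m (S r) (i + 1) x
                    + ((x - t i) * A * dbpiece t m (S r) i x + (T - x) * B * dbpiece t m (S r) (i + 1) x));
        [ring | rewrite KI; ring].
Qed.

Lemma dbpiece_continuous m p i x : continuous (dbpiece t m p i) x.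
Proof.
  destruct p as [|q]; [apply continuous_const|].
  apply (ex_derive_continuous (K := R_AbsRing) (V := R_NormedModule)).
  set (A := inv_gap t i (i + Z.of_nat (S q))). set (B := inv_gap t (i + 1) (i + Z.of_nat (S q) + 1)).
  exists (INR (S q) * (A * dbpiece t m q i x - B * dbpiece t m q (i + 1) x)).
  apply (is_derive_ext (fun y => INR (S q) * (A * bpiece t m q i y - B * bpiece t m q (i + 1) y)));
    [intros y; symmetry; apply dbpiece_S|].
  apply is_derive_scal, (is_derive_minus (V := R_NormedModule)); apply is_derive_scal, bpiece_derive.
Qed.

Lemma is_RInt_dbpiece m p i :
  is_RInt (dbpiece t m p i) (t m) (t (m + 1)%Z) (bpiece t m p i (t (m + 1)%Z) - bpiece t m p i (t m)).
Proof.
  apply (is_RInt_derive (bpiece t m p i)); intros; [apply bpiece_derive | apply dbpiece_continuous].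
Qed.

Lemma bpiece_knot_continuous m p i : (0 <= m)%Z -> (m + 1 <= Z.of_nat g)%Z ->
  bpiece t m (S p) i (t (m + 1)%Z) = bpiece t (m + 1) (S p) i (t (m + 1)%Z).
Proof.
  intros Hm0 Hm1. revert i. induction p as [|p IH]; intros i.
  - pose proof (knot_interior_lt m ltac:(lia)). pose proof (knot_interior_lt (m + 1) ltac:(lia)).
    rewrite !bpiece_S. cbn [bpiece]. change (Z.of_nat 1) with 1%Z.
    destruct (Z.eq_dec i (m - 1)) as [->|]; [replace (m - 1 + 1)%Z with m by lia|].
    all: repeat destruct Z.eq_dec; try lia; try subst i; rewrite ?inv_gap_cancel by lra; ring.
  - rewrite (bpiece_S t m (S p)), (bpiece_S t (m + 1) (S p)), !IH. reflexivity.
Qed.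

Lemma bpiece_left_end p i : bpiece t 0 p i a = if Z.eq_dec i (- Z.of_nat p) then 1 else 0.
Proof.
  pose proof (knot_interior_lt 0 ltac:(lia)) as H01. rewrite (knot_left 0) in H01 by lia.
  change (0 + 1)%Z with 1%Z in H01.
  revert i. induction p as [|p IH]; intros i; [reflexivity|].
  rewrite bpiece_S, !IH.
  destruct (Z.eq_dec i (- Z.of_nat p)) as [->|]; [|destruct (Z.eq_dec (i + 1) (- Z.of_nat p)) as [E|]].
  - rewrite (knot_left (- Z.of_nat p)) by lia. repeat destruct Z.eq_dec; try lia. ring.
  - replace (i + Z.of_nat (S p) + 1)%Z with 1%Z by lia.
    assert (C : (t 1%Z - t (i + 1)%Z) * inv_gap t (i + 1) 1 = 1)
      by (apply inv_gap_cancel; rewrite (knot_left (i + 1)) by lia; lra).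
    rewrite (knot_left (i + 1)) in C by lia. rewrite C.
    repeat destruct Z.eq_dec; try lia. ring.
  - repeat destruct Z.eq_dec; try lia. ring.
Qed.

Lemma bpiece_right_end p i :
  bpiece t (Z.of_nat g) p i b = if Z.eq_dec i (Z.of_nat g) then 1 else 0.
Proof.
  pose proof (knot_interior_lt (Z.of_nat g) ltac:(lia)) as Hg.
  rewrite (knot_right (Z.of_nat g + 1)) in Hg by lia.
  revert i. induction p as [|p IH]; intros i; [reflexivity|].
  rewrite bpiece_S, !IH.
  destruct (Z.eq_dec i (Z.of_nat g)) as [->|]; [|destruct (Z.eq_dec (i + 1) (Z.of_nat g)) as [E|]].
  - set (j := (Z.of_nat g + Z.of_nat (S p))%Z).
    assert (C : (t j - t (Z.of_nat g)) * inv_gap t (Z.of_nat g) j = 1)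
      by (apply inv_gap_cancel; unfold j; rewrite (knot_right (Z.of_nat g + Z.of_nat (S p))) by lia; lra).
    rewrite (knot_right j) in C by (unfold j; lia). rewrite C.
    repeat destruct Z.eq_dec; try lia. ring.
  - rewrite (knot_right (i + Z.of_nat (S p) + 1)) by lia.
    repeat destruct Z.eq_dec; try lia. ring.
  - repeat destruct Z.eq_dec; try lia. ring.
Qed.

Lemma dbpiece_zsum m p (e : Z -> R) x :
  zsum (- Z.of_nat (S p)) (Z.of_nat g) (fun i => e i * dbpiece t m (S p) i x) =
  INR (S p) * zsum (- Z.of_nat p) (Z.of_nat g)
    (fun i => (e i - e (i - 1)%Z) * inv_gap t i (i + Z.of_nat (S p)) * bpiece t m p i x).
Proof.
  set (w i := inv_gap t i (i + Z.of_nat (S p))).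
  pose (F i := e i * w i * bpiece t m p i x).
  pose (G j := - (e (j - 1)%Z * w j * bpiece t m p j x)).
  replace (- Z.of_nat (S p))%Z with (- Z.of_nat p - 1)%Z by lia.
  transitivity (INR (S p) * zsum (- Z.of_nat p - 1) (Z.of_nat g) (fun i => F i + G (i + 1)%Z)).
  { rewrite <- zsum_scal. apply zsum_ext. intros i _. rewrite dbpiece_S. unfold F, G, w.
    replace (i + 1 - 1)%Z with i by lia.
    replace (i + 1 + Z.of_nat (S p))%Z with (i + Z.of_nat (S p) + 1)%Z by lia. ring. }
  rewrite zsum_shift_boundary.
  - f_equal. apply zsum_ext. intros i _. unfold F, G, w. ring.
  - lia.
  - unfold F, w. rewrite inv_gap_eq by (rewrite !knot_left by lia; reflexivity). ring.
  - unfold G, w. rewrite inv_gap_eq by (rewrite !knot_right by lia; reflexivity). ring.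
Qed.

Lemma bpiece_indep p (e : Z -> R) :
  (forall m, (0 <= m <= Z.of_nat g)%Z -> forall x, t m < x < t (m + 1)%Z ->
     zsum (- Z.of_nat p) (Z.of_nat g) (fun i => e i * bpiece t m p i x) = 0) ->
  forall i, (- Z.of_nat p <= i <= Z.of_nat g)%Z -> e i = 0.
Proof.
  revert e. induction p as [|p IH]; intros e He i Hi.
  - pose proof (knot_interior_lt i ltac:(lia)).
    specialize (He i ltac:(lia) ((t i + t (i + 1)%Z) / 2) ltac:(lra)).
    rewrite (zsum_ext _ _ _ (fun j => if Z.eq_dec j i then e i else 0)), zsum_delta in He;
      [exact He | lia | intros j _; cbn [bpiece]; destruct Z.eq_dec as [->|]; ring].
  - (* differentiating on each knot interval lowers the degree and turns [e] into its differences *)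
    assert (Hdiff : forall i, (- Z.of_nat p <= i <= Z.of_nat g)%Z ->
                      (e i - e (i - 1)%Z) * inv_gap t i (i + Z.of_nat (S p)) = 0).
    { apply IH. intros m Hm x Hx.
      pose proof (is_derive_zsum (fun i y => e i * bpiece t m (S p) i y) _ (- Z.of_nat (S p)) (Z.of_nat g) x
        (fun i _ => is_derive_scal _ x (e i) _ (bpiece_derive m (S p) i x))) as D.
      apply (is_derive_zero_on_interval _ (t m) (t (m + 1)%Z) x) in D; [|apply He; assumption|exact Hx].
      rewrite dbpiece_zsum in D. apply Rmult_integral in D as [D|D]; [|exact D].
      exfalso. apply (not_0_INR (S p)); [lia|exact D]. }
    assert (Hconst : forall i, (- Z.of_nat (S p) <= i <= Z.of_nat g)%Z -> e i = e (- Z.of_nat (S p))%Z).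
    { apply const_of_eq_pred. intros j Hj. specialize (Hdiff j ltac:(lia)).
      pose proof (knot_lt j (Z.max j 0) (j + Z.of_nat (S p)) ltac:(lia) ltac:(lia) ltac:(lia)).
      apply Rmult_integral in Hdiff as [Hd|Hd]; [lra|].
      unfold inv_gap in Hd. destruct Req_EM_T; [lra|]. exfalso. revert Hd. apply Rinv_neq_0_compat. lra. }
    pose proof (knot_interior_lt 0 ltac:(lia)).
    specialize (He 0%Z ltac:(lia) ((t 0%Z + t (0 + 1)%Z) / 2) ltac:(lra)).
    rewrite (zsum_ext _ _ _
      (fun i => e (- Z.of_nat (S p))%Z * bpiece t 0 (S p) i ((t 0%Z + t (0 + 1)%Z) / 2))),
      zsum_scal, bpiece_partition_unity, Rmult_1_r in He by (lia || (intros; rewrite Hconst; auto)).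
    rewrite Hconst by lia. exact He.
Qed.

Lemma bspline_partition_unity p x : a <= x <= b ->
  zsum (- Z.of_nat p) (Z.of_nat g) (fun i => bspline t b p i x) = 1.
Proof.
  intros Hx. destruct (exists_piece x Hx) as [m [Hm Hp]].
  rewrite <- (bpiece_partition_unity m p x Hm). apply zsum_ext. intros i _.
  apply bspline_eq_bpiece; assumption.
Qed.

Lemma bspline_indep p (e : Z -> R) :
  (forall x, a <= x <= b -> zsum (- Z.of_nat p) (Z.of_nat g) (fun i => e i * bspline t b p i x) = 0) ->
  forall i, (- Z.of_nat p <= i <= Z.of_nat g)%Z -> e i = 0.
Proof.
  intros He. apply bpiece_indep. intros m Hm x Hx.
  pose proof (knot_bounds m). pose proof (knot_bounds (m + 1)).
  rewrite <- (He x) by lra. apply zsum_ext. intros i _.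
  rewrite (bspline_eq_bpiece m) by (unfold in_piece; lra || assumption). reflexivity.
Qed.

(** * ZB-splines *)

Definition zb_weight (k : nat) (j : Z) : R := INR (k + 1) / (t (j + Z.of_nat k + 1)%Z - t j).

Lemma zbspline_split k i x :
  zbspline t b k i x = zb_weight k i * bspline t b k i x - zb_weight k (i + 1) * bspline t b k (i + 1) x.
Proof.
  unfold zbspline, zb_weight. replace (i + 1 + Z.of_nat k + 1)%Z with (i + Z.of_nat k + 2)%Z by lia.
  unfold Rdiv. ring.
Qed.

Lemma zb_weight_pos k j : (- Z.of_nat k <= j <= Z.of_nat g)%Z -> 0 < zb_weight k j.
Proof.
  intros Hj. pose proof (knot_lt j (Z.max j 0) (j + Z.of_nat k + 1) ltac:(lia) ltac:(lia) ltac:(lia)).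
  apply Rdiv_lt_0_compat; [apply lt_0_INR; lia | lra].
Qed.

Lemma zbspline_eq_dbpiece k i m x : (- Z.of_nat k <= i <= Z.of_nat g - 1)%Z ->
  (0 <= m <= Z.of_nat g)%Z -> t m <= x < t (m + 1)%Z ->
  zbspline t b k i x = dbpiece t m (S k) i x.
Proof.
  intros Hi Hm Hx. unfold zbspline. rewrite dbpiece_S, !(bspline_eq_bpiece m) by (unfold in_piece; auto).
  pose proof (knot_lt i (Z.max i 0) (i + Z.of_nat k + 1) ltac:(lia) ltac:(lia) ltac:(lia)).
  pose proof (knot_lt (i + 1) (Z.max (i + 1) 0) (i + Z.of_nat k + 2) ltac:(lia) ltac:(lia) ltac:(lia)).
  replace (i + Z.of_nat (S k))%Z with (i + Z.of_nat k + 1)%Z by lia.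
  replace (i + Z.of_nat k + 1 + 1)%Z with (i + Z.of_nat k + 2)%Z by lia.
  replace (k + 1)%nat with (S k) by lia.
  unfold inv_gap. do 2 (destruct Req_EM_T; [lra|]). field. lra.
Qed.

Lemma is_RInt_zbspline k i : (- Z.of_nat k <= i <= Z.of_nat g - 1)%Z -> is_RInt (zbspline t b k i) a b 0.
Proof.
  intros Hi.
  assert (Hpiece : forall m, (0 <= m <= Z.of_nat g)%Z ->
    is_RInt (zbspline t b k i) (t m) (t (m + 1)%Z)
      (bpiece t m (S k) i (t (m + 1)%Z) - bpiece t m (S k) i (t m))).
  { intros m Hm. pose proof (knot_interior_lt m Hm).
    apply (is_RInt_ext (dbpiece t m (S k) i)); [|apply is_RInt_dbpiece].
    rewrite Rmin_left, Rmax_right by lra. intros x Hx.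
    symmetry. apply zbspline_eq_dbpiece; [assumption..|lra]. }
  (* the pieces telescope because the degree-(k+1) polynomial pieces agree at interior knots *)
  assert (Hsum : forall n, (n <= g)%nat ->
    is_RInt (zbspline t b k i) (t 0%Z) (t (Z.of_nat n + 1)%Z)
      (bpiece t (Z.of_nat n) (S k) i (t (Z.of_nat n + 1)%Z) - bpiece t 0 (S k) i (t 0%Z))).
  { induction n as [|n IH]; intros Hn; [apply (Hpiece 0%Z); lia|].
    pose proof (is_RInt_Chasles _ _ _ _ _ _ (IH ltac:(lia)) (Hpiece (Z.of_nat n + 1)%Z ltac:(lia))) as C.
    replace (Z.of_nat (S n)) with (Z.of_nat n + 1)%Z by lia.
    rewrite (bpiece_knot_continuous (Z.of_nat n)) in C by lia.
    match goal with |- is_RInt _ _ _ ?v => replace v with (plus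
      (bpiece t (Z.of_nat n + 1) (S k) i (t (Z.of_nat n + 1)%Z) - bpiece t 0 (S k) i (t 0%Z))
      (bpiece t (Z.of_nat n + 1) (S k) i (t (Z.of_nat n + 1 + 1)%Z)
       - bpiece t (Z.of_nat n + 1) (S k) i (t (Z.of_nat n + 1)%Z))) end;
      [exact C | unfold plus; simpl; ring]. }
  specialize (Hsum g (le_n g)).
  rewrite (knot_left 0), (knot_right (Z.of_nat g + 1)), bpiece_right_end, bpiece_left_end in Hsum by lia.
  do 2 (destruct Z.eq_dec; [lia|]). rewrite Rminus_0_r in Hsum. exact Hsum.
Qed.

Lemma is_RInt_zbspline_comb k (c : Z -> R) :
  is_RInt (fun x => zsum (- Z.of_nat k) (Z.of_nat g - 1) (fun i => c i * zbspline t b k i x)) a b 0.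
Proof.
  rewrite <- (zsum_zero (- Z.of_nat k) (Z.of_nat g - 1)).
  apply (is_RInt_zsum (fun i x => c i * zbspline t b k i x)). intros i Hi.
  rewrite <- (Rmult_0_r (c i)). apply (is_RInt_scal (V := R_NormedModule)), is_RInt_zbspline, Hi.
Qed.

Definition extend_by_zero (lo hi : Z) (c : Z -> R) (i : Z) : R :=
  if Z_lt_dec i lo then 0 else if Z_lt_dec hi i then 0 else c i.

Lemma zsum_zbspline_as_bspline k (c : Z -> R) x :
  let c' := extend_by_zero (- Z.of_nat k) (Z.of_nat g - 1) c in
  zsum (- Z.of_nat k) (Z.of_nat g - 1) (fun i => c i * zbspline t b k i x) =
  zsum (- Z.of_nat k) (Z.of_nat g) (fun i => (c' i - c' (i - 1)%Z) * zb_weight k i * bspline t b k i x).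
Proof.
  intros c'.
  pose (F i := c' i * zb_weight k i * bspline t b k i x).
  pose (G j := - (c' (j - 1)%Z * zb_weight k j * bspline t b k j x)).
  assert (Hc' : forall i, (i < - Z.of_nat k \/ Z.of_nat g - 1 < i)%Z -> c' i = 0).
  { intros i Hi. unfold c', extend_by_zero. repeat destruct Z_lt_dec; lia || reflexivity. }
  transitivity (zsum (- Z.of_nat k - 1) (Z.of_nat g) (fun i => F i + G (i + 1)%Z)).
  - assert (Hends : forall i, (i = - Z.of_nat k - 1 \/ i = Z.of_nat g)%Z -> F i + G (i + 1)%Z = 0).
    { intros i Hi. unfold F, G. rewrite Z.add_simpl_r, Hc' by lia. ring. }
    rewrite (zsum_first (- Z.of_nat k - 1)), (zsum_last (- Z.of_nat k - 1 + 1) (Z.of_nat g)), !Hends by lia.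
    replace (- Z.of_nat k - 1 + 1)%Z with (- Z.of_nat k)%Z by lia.
    rewrite Rplus_0_l, Rplus_0_r. apply zsum_ext. intros i Hi. unfold F, G.
    rewrite zbspline_split, Z.add_simpl_r. unfold c', extend_by_zero.
    repeat destruct Z_lt_dec; try lia. ring.
  - rewrite zsum_shift_boundary; [apply zsum_ext; intros; unfold F, G; ring | lia | | ];
      unfold F, G; rewrite ?Z.add_simpl_r, Hc' by lia; ring.
Qed.

Lemma zbspline_indep_const k (c : Z -> R) c0 :
  (forall x, a <= x <= b ->
     zsum (- Z.of_nat k) (Z.of_nat g - 1) (fun i => c i * zbspline t b k i x) + c0 = 0) ->
  c0 = 0 /\ forall i, (- Z.of_nat k <= i <= Z.of_nat g - 1)%Z -> c i = 0.
Proof.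
  intros H.
  assert (Hc0 : c0 = 0)
    by exact (const_eq_0_of_is_RInt_0 _ a b c0 knot_ends_lt (is_RInt_zbspline_comb k c) H).
  split; [exact Hc0|].
  set (c' := extend_by_zero (- Z.of_nat k) (Z.of_nat g - 1) c).
  assert (Hdiff : forall i, (- Z.of_nat k <= i <= Z.of_nat g)%Z -> (c' i - c' (i - 1)%Z) * zb_weight k i = 0).
  { apply (bspline_indep k (fun i => (c' i - c' (i - 1)%Z) * zb_weight k i)).
    intros x Hx. rewrite <- (H x Hx), Hc0, Rplus_0_r, (zsum_zbspline_as_bspline k c x). reflexivity. }
  assert (Hconst : forall i, (- Z.of_nat k - 1 <= i <= Z.of_nat g)%Z -> c' i = c' (- Z.of_nat k - 1)%Z).
  { apply const_of_eq_pred. intros i Hi. specialize (Hdiff i ltac:(lia)).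
    pose proof (zb_weight_pos k i ltac:(lia)). apply Rmult_integral in Hdiff as [D|D]; lra. }
  intros i Hi. specialize (Hconst i ltac:(lia)). unfold c', extend_by_zero in Hconst.
  destruct (Z_lt_dec i (- Z.of_nat k)), (Z_lt_dec (Z.of_nat g - 1) i),
    (Z_lt_dec (- Z.of_nat k - 1) (- Z.of_nat k)); try lia. exact Hconst.
Qed.

Definition in_zspan1 (k : nat) (f : R -> R) : Prop :=
  exists c0 (c : Z -> R), forall x, a <= x <= b ->
    f x = c0 + zsum (- Z.of_nat k) (Z.of_nat g - 1) (fun m => c m * zbspline t b k m x).

Lemma in_zspan1_ext k f f' : in_zspan1 k f -> (forall x, a <= x <= b -> f' x = f x) -> in_zspan1 k f'.
Proof. intros [c0 [c H]] E. exists c0, c. intros x Hx. rewrite E by exact Hx. auto. Qed.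

Lemma in_zspan1_const k v : in_zspan1 k (fun _ => v).
Proof.
  exists v, (fun _ => 0). intros x _.
  rewrite (zsum_ext _ _ _ (fun _ => 0)), zsum_zero by (intros; ring). ring.
Qed.

Lemma in_zspan1_zbspline k m : (- Z.of_nat k <= m <= Z.of_nat g - 1)%Z -> in_zspan1 k (zbspline t b k m).
Proof.
  intros Hm. exists 0, (fun j => if Z.eq_dec j m then 1 else 0). intros x _.
  rewrite (zsum_ext _ _ _ (fun j => if Z.eq_dec j m then zbspline t b k m x else 0)), zsum_delta
    by (assumption || (intros j _; destruct Z.eq_dec as [->|]; ring)).
  ring.
Qed.

Lemma in_zspan1_plus k f f' : in_zspan1 k f -> in_zspan1 k f' -> in_zspan1 k (fun x => f x + f' x).
Proof.
  intros [c0 [c H]] [c0' [c' H']]. exists (c0 + c0'), (fun m => 1 * c m + c' m). intros x Hx.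
  rewrite H, H', zsum_lincomb by exact Hx. ring.
Qed.

Lemma in_zspan1_scal k s f : in_zspan1 k f -> in_zspan1 k (fun x => s * f x).
Proof.
  intros [c0 [c H]]. exists (s * c0), (fun m => s * c m + 0). intros x Hx.
  rewrite H, zsum_lincomb, zsum_scal by exact Hx. ring.
Qed.

Lemma in_zspan1_zsum k (F : Z -> R -> R) lo hi :
  (forall i, (lo <= i <= hi)%Z -> in_zspan1 k (F i)) -> in_zspan1 k (fun x => zsum lo hi (fun i => F i x)).
Proof.
  intros HF. apply (zsum_closed (fun f _ => in_zspan1 k f) F (fun _ => 0)); auto.
  - apply in_zspan1_const.
  - intros f f' _ _. apply in_zspan1_plus.
Qed.

Lemma bspline_in_zspan1 k i : (- Z.of_nat k <= i <= Z.of_nat g)%Z -> in_zspan1 k (bspline t b k i).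
Proof.
  intros Hi. set (u j x := zb_weight k j * bspline t b k j x).
  (* telescoping: u j - u g is the sum of the ZB-splines Z_j, ..., Z_{g-1} *)
  assert (Hdiff : forall j, (- Z.of_nat k <= j <= Z.of_nat g)%Z ->
                    in_zspan1 k (fun x => u j x - u (Z.of_nat g) x)).
  { intros j Hj. replace j with (Z.of_nat g - Z.of_nat (Z.to_nat (Z.of_nat g - j)))%Z by lia.
    assert (Hn : (Z.of_nat (Z.to_nat (Z.of_nat g - j)) <= Z.of_nat g + Z.of_nat k)%Z) by lia. revert Hn.
    induction (Z.to_nat (Z.of_nat g - j)) as [|n IH]; intros Hn.
    - apply (in_zspan1_ext k (fun _ => 0)); [apply in_zspan1_const|].
      intros x _. rewrite Z.sub_0_r. ring.
    - apply (in_zspan1_ext k (fun x => zbspline t b k (Z.of_nat g - Z.of_nat (S n)) x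
                                       + (u (Z.of_nat g - Z.of_nat n)%Z x - u (Z.of_nat g) x))).
      + apply in_zspan1_plus; [apply in_zspan1_zbspline; lia | apply IH; lia].
      + intros x _. rewrite zbspline_split. unfold u.
        replace (Z.of_nat g - Z.of_nat (S n) + 1)%Z with (Z.of_nat g - Z.of_nat n)%Z by lia. ring. }
  (* the partition of unity then isolates u g *)
  set (W := zsum (- Z.of_nat k) (Z.of_nat g) (fun j => / zb_weight k j)).
  assert (HW : 0 < W).
  { apply zsum_pos; [lia|]. intros j Hj. apply Rinv_0_lt_compat, zb_weight_pos, Hj. }
  assert (Hg : in_zspan1 k (u (Z.of_nat g))).
  { apply (in_zspan1_ext k (fun x => / W + / W * (-1 * zsum (- Z.of_nat k) (Z.of_nat g)
                                       (fun j => / zb_weight k j * (u j x - u (Z.of_nat g) x))))).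
    - apply in_zspan1_plus; [apply in_zspan1_const|].
      do 2 apply in_zspan1_scal. apply in_zspan1_zsum. intros j Hj. apply in_zspan1_scal, Hdiff, Hj.
    - intros x Hx.
      rewrite (zsum_ext _ _ (fun j => / zb_weight k j * (u j x - u (Z.of_nat g) x))
                 (fun j => bspline t b k j x - / zb_weight k j * u (Z.of_nat g) x)).
      + rewrite zsum_minus, zsum_scal_r, bspline_partition_unity by exact Hx. fold W. field. lra.
      + intros j Hj. unfold u. pose proof (zb_weight_pos k j Hj). field. lra. }
  apply (in_zspan1_ext k (fun x => / zb_weight k i * ((u i x - u (Z.of_nat g) x) + u (Z.of_nat g) x))).
  - apply in_zspan1_scal, in_zspan1_plus; [apply Hdiff, Hi | exact Hg].
  - intros x _. unfold u. pose proof (zb_weight_pos k i Hi). field. lra.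
Qed.

End KnotSequence.

(* The knots of [knots t a b g k] are only constrained on [-k, g+k+1]; clamping extends them
   constantly to all of Z without changing the B-splines of indices [-k, g]. *)
Definition clamp_knots (t : Z -> R) (g k : nat) (i : Z) : R :=
  t (Z.max (- Z.of_nat k) (Z.min i (Z.of_nat g + Z.of_nat k + 1))).

Lemma clamp_knots_eq (t : Z -> R) (g k : nat) (i : Z) :
  (- Z.of_nat k <= i <= Z.of_nat g + Z.of_nat k + 1)%Z -> clamp_knots t g k i = t i.
Proof. intros Hi. unfold clamp_knots. f_equal. lia. Qed.

Lemma knots_clamp (t : Z -> R) (a b : R) (g k : nat) : knots t a b g k -> knot_seq (clamp_knots t g k) a b g.
Proof.
  intros [Hl [Hr Hlt]]. unfold clamp_knots. split; [|split].
  - intros i Hi. apply Hl. lia.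
  - intros i Hi. apply Hr. lia.
  - intros i Hi. rewrite Z.min_l, Z.max_r, (Z.min_l (i + 1)), (Z.max_r _ (i + 1)) by lia. apply Hlt. lia.
Qed.

Lemma bspline_clamp (t : Z -> R) (b : R) (g k : nat) (i : Z) (x : R) : (- Z.of_nat k <= i <= Z.of_nat g)%Z ->
  bspline (clamp_knots t g k) b k i x = bspline t b k i x.
Proof. intros Hi. apply bspline_ext. intros j Hj. apply clamp_knots_eq. lia. Qed.

Lemma zbspline_clamp (t : Z -> R) (b : R) (g k : nat) (i : Z) (x : R) :
  (- Z.of_nat k <= i <= Z.of_nat g - 1)%Z -> zbspline (clamp_knots t g k) b k i x = zbspline t b k i x.
Proof. intros Hi. unfold zbspline. rewrite !bspline_clamp, !clamp_knots_eq by lia. reflexivity. Qed.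

Section Knots.

Variables (t : Z -> R) (a b : R) (g k : nat).
Hypothesis Ht : knots t a b g k.

Let Hclamp := knots_clamp t a b g k Ht.

Lemma knots_ends_lt : a < b.
Proof. exact (knot_ends_lt _ _ _ _ Hclamp). Qed.

Lemma zsum_zbspline_clamp (c : Z -> R) x :
  zsum (- Z.of_nat k) (Z.of_nat g - 1) (fun i => c i * zbspline (clamp_knots t g k) b k i x)
  = zsum (- Z.of_nat k) (Z.of_nat g - 1) (fun i => c i * zbspline t b k i x).
Proof. apply zsum_ext. intros i Hi. rewrite zbspline_clamp by exact Hi. reflexivity. Qed.

Lemma knots_is_RInt_zbspline i : (- Z.of_nat k <= i <= Z.of_nat g - 1)%Z ->
  is_RInt (zbspline t b k i) a b 0.
Proof.
  intros Hi. apply (is_RInt_ext (zbspline (clamp_knots t g k) b k i)).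
  - intros x _. apply zbspline_clamp, Hi.
  - apply (is_RInt_zbspline _ _ _ _ Hclamp), Hi.
Qed.

Lemma knots_is_RInt_zbspline_comb (c : Z -> R) :
  is_RInt (fun x => zsum (- Z.of_nat k) (Z.of_nat g - 1) (fun i => c i * zbspline t b k i x)) a b 0.
Proof.
  apply (is_RInt_ext (fun x => zsum (- Z.of_nat k) (Z.of_nat g - 1)
                                 (fun i => c i * zbspline (clamp_knots t g k) b k i x))).
  - intros x _. apply zsum_zbspline_clamp.
  - apply (is_RInt_zbspline_comb _ _ _ _ Hclamp).
Qed.

Lemma knots_zbspline_indep_const (c : Z -> R) c0 :
  (forall x, a <= x <= b ->
     zsum (- Z.of_nat k) (Z.of_nat g - 1) (fun i => c i * zbspline t b k i x) + c0 = 0) ->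
  c0 = 0 /\ forall i, (- Z.of_nat k <= i <= Z.of_nat g - 1)%Z -> c i = 0.
Proof.
  intros H. apply (zbspline_indep_const _ _ _ _ Hclamp).
  intros x Hx. rewrite zsum_zbspline_clamp. apply H, Hx.
Qed.

Lemma knots_bspline_partition_unity x : a <= x <= b ->
  zsum (- Z.of_nat k) (Z.of_nat g) (fun i => bspline t b k i x) = 1.
Proof.
  intros Hx. rewrite <- (bspline_partition_unity _ _ _ _ Hclamp k x Hx).
  apply zsum_ext. intros i Hi. symmetry. apply bspline_clamp, Hi.
Qed.

Lemma knots_bspline_in_zspan1 i : (- Z.of_nat k <= i <= Z.of_nat g)%Z ->
  in_zspan1 t a b g k (bspline t b k i).
Proof.
  intros Hi. destruct (bspline_in_zspan1 _ _ _ _ Hclamp k i Hi) as [c0 [c Hcomb]].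
  exists c0, c. intros x Hx.
  rewrite <- (bspline_clamp t b g k i x), <- zsum_zbspline_clamp by exact Hi. apply Hcomb, Hx.
Qed.

End Knots.

(** * Tensor product splines *)

Definition in_S1 (t : Z -> R) (a b : R) (g k : nat) (f : R -> R) : Prop :=
  exists u : Z -> R, forall x, a <= x <= b ->
    f x = zsum (- Z.of_nat k) (Z.of_nat g) (fun i => u i * bspline t b k i x).

Lemma zbspline_in_S1 (t : Z -> R) (a b : R) (g k : nat) (i : Z) :
  (- Z.of_nat k <= i <= Z.of_nat g - 1)%Z -> in_S1 t a b g k (zbspline t b k i).
Proof.
  intros Hi. exists (fun j => (if Z.eq_dec j i then zb_weight t k i else 0)
                       - (if Z.eq_dec j (i + 1) then zb_weight t k (i + 1) else 0)).
  intros x _. rewrite zbspline_split.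
  rewrite (zsum_ext _ _ _ (fun j => (if Z.eq_dec j i then zb_weight t k i * bspline t b k i x else 0)
     - (if Z.eq_dec j (i + 1) then zb_weight t k (i + 1) * bspline t b k (i + 1) x else 0))).
  - rewrite zsum_minus, !zsum_delta by lia. reflexivity.
  - intros j _. destruct (Z.eq_dec j i) as [E1|], (Z.eq_dec j (i + 1)) as [E2|]; try lia;
      rewrite ?E1, ?E2; ring.
Qed.

Lemma knots_one_in_S1 (t : Z -> R) (a b : R) (g k : nat) : knots t a b g k -> in_S1 t a b g k (fun _ => 1).
Proof.
  intros Ht. exists (fun _ => 1). intros x Hx.
  rewrite (zsum_ext _ _ _ (fun i => bspline t b k i x)) by (intros; ring).
  symmetry. apply (knots_bspline_partition_unity t a b g k Ht x Hx).
Qed.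

Lemma dint_is (a b c d : R) (s : R -> R -> R) (G : R -> R) (v : R) :
  (forall x, is_RInt (fun y => s x y) c d (G x)) -> is_RInt G a b v -> dint a b c d s = v.
Proof.
  intros Hin Hout. unfold dint. rewrite (RInt_ext _ G).
  - apply (is_RInt_unique (V := R_CompleteNormedModule)), Hout.
  - intros x _. apply (is_RInt_unique (V := R_CompleteNormedModule)), Hin.
Qed.

Lemma dint_ext (a b c d : R) (s s' : R -> R -> R) : a <= b -> c <= d ->
  (forall x y, in_Omega a b c d x y -> s x y = s' x y) -> dint a b c d s = dint a b c d s'.
Proof.
  intros Hab Hcd H. unfold dint. apply RInt_ext. rewrite Rmin_left, Rmax_right by lra.
  intros x Hx. apply RInt_ext. rewrite Rmin_left, Rmax_right by lra.
  intros y Hy. apply H. split; lra.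
Qed.

Lemma zcomb_regroup (t1 t2 : Z -> R) (b d : R) (g h k l : nat) (al : Z -> Z -> R) (be ga : Z -> R)
  (x y : R) :
  zcomb t1 t2 b d g h k l al be ga x y =
  zsum (- Z.of_nat l) (Z.of_nat h - 1) (fun j =>
    (zsum (- Z.of_nat k) (Z.of_nat g - 1) (fun i => al i j * zbspline t1 b k i x) + ga j)
    * zbspline t2 d l j y)
  + zsum (- Z.of_nat k) (Z.of_nat g - 1) (fun i => be i * zbspline t1 b k i x).
Proof.
  unfold zcomb. rewrite zsum_swap.
  rewrite (zsum_ext _ _ (fun j => (_ + ga j) * _) (fun j =>
    zsum (- Z.of_nat k) (Z.of_nat g - 1) (fun i => al i j * (zbspline t1 b k i x * zbspline t2 d l j y))
    + ga j * zbspline t2 d l j y)).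
  - rewrite zsum_plus. ring.
  - intros j _. rewrite Rmult_plus_distr_r, <- zsum_scal_r. f_equal. apply zsum_ext. intros; ring.
Qed.

Section TensorProduct.

Variables (lam mu : Z -> R) (a b c d : R) (g h k l : nat).

Lemma in_S_prod s F H : (forall x y, s x y = F x * H y) ->
  in_S1 lam a b g k F -> in_S1 mu c d h l H -> in_S lam mu a b c d g h k l s.
Proof.
  intros Hs [u HF] [v HH]. exists (fun i j => u i * v j). intros x y [Hx Hy].
  rewrite Hs, HF, HH, <- zsum_prod by assumption.
  apply zsum_ext. intros i _. apply zsum_ext. intros j _. ring.
Qed.

Lemma dint_prod s F H vF vH : (forall x y, s x y = F x * H y) ->
  is_RInt F a b vF -> is_RInt H c d vH -> dint a b c d s = vF * vH.
Proof.
  intros Hs HF HH. apply (dint_is _ _ _ _ _ (fun x => F x * vH)).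
  - intros x. apply (is_RInt_ext (fun y => F x * H y)); [intros; symmetry; apply Hs|].
    apply (is_RInt_scal (V := R_NormedModule)), HH.
  - apply (is_RInt_ext (fun x => vH * F x)); [intros; apply Rmult_comm|].
    rewrite Rmult_comm. apply (is_RInt_scal (V := R_NormedModule)), HF.
Qed.

Lemma in_Zsp_prod s F H vF vH : (forall x y, s x y = F x * H y) ->
  in_S1 lam a b g k F -> in_S1 mu c d h l H -> is_RInt F a b vF -> is_RInt H c d vH ->
  vF * vH = 0 -> in_Zsp lam mu a b c d g h k l s.
Proof.
  intros Hs HF HH IF IH Hv. split; [apply (in_S_prod _ F H); assumption|].
  rewrite (dint_prod s F H vF vH); assumption.
Qed.

Lemma zcomb_lincomb s al be ga al' be' ga' x y :
  zcomb lam mu b d g h k l (fun i j => s * al i j + al' i j) (fun i => s * be i + be' i)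
    (fun j => s * ga j + ga' j) x y
  = s * zcomb lam mu b d g h k l al be ga x y + zcomb lam mu b d g h k l al' be' ga' x y.
Proof.
  unfold zcomb. rewrite !zsum_lincomb.
  rewrite (zsum_ext _ _ _ (fun i =>
    s * zsum (- Z.of_nat l) (Z.of_nat h - 1) (fun j => al i j * (zbspline lam b k i x * zbspline mu d l j y))
    + zsum (- Z.of_nat l) (Z.of_nat h - 1) (fun j => al' i j * (zbspline lam b k i x * zbspline mu d l j y))))
    by (intros; apply zsum_lincomb).
  rewrite zsum_plus, zsum_scal. ring.
Qed.

Lemma zcomb_zero x y : zcomb lam mu b d g h k l (fun _ _ => 0) (fun _ => 0) (fun _ => 0) x y = 0.
Proof.
  unfold zcomb. rewrite (zsum_ext _ _ _ (fun _ => 0)) by (intros; rewrite zsum_scal; ring).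
  rewrite zsum_zero, !zsum_scal. ring.
Qed.

Definition in_zspan2 (f : R -> R -> R) : Prop :=
  exists C al be ga, forall x y, in_Omega a b c d x y -> f x y = C + zcomb lam mu b d g h k l al be ga x y.

Lemma in_zspan2_ext f f' :
  in_zspan2 f -> (forall x y, in_Omega a b c d x y -> f' x y = f x y) -> in_zspan2 f'.
Proof. intros [C [al [be [ga H]]]] E. exists C, al, be, ga. intros x y Hxy. rewrite E by exact Hxy. auto. Qed.

Lemma in_zspan2_zero : in_zspan2 (fun _ _ => 0).
Proof. exists 0, (fun _ _ => 0), (fun _ => 0), (fun _ => 0). intros x y _. rewrite zcomb_zero. ring. Qed.

Lemma in_zspan2_plus f f' : in_zspan2 f -> in_zspan2 f' -> in_zspan2 (fun x y => f x y + f' x y).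
Proof.
  intros [C [al [be [ga H]]]] [C' [al' [be' [ga' H']]]].
  exists (C + C'), (fun i j => 1 * al i j + al' i j), (fun i => 1 * be i + be' i),
    (fun j => 1 * ga j + ga' j).
  intros x y Hxy. rewrite zcomb_lincomb, H, H' by exact Hxy. ring.
Qed.

Lemma in_zspan2_scal s f : in_zspan2 f -> in_zspan2 (fun x y => s * f x y).
Proof.
  intros [C [al [be [ga H]]]].
  exists (s * C), (fun i j => s * al i j + 0), (fun i => s * be i + 0), (fun j => s * ga j + 0).
  intros x y Hxy. rewrite zcomb_lincomb, zcomb_zero, H by exact Hxy. ring.
Qed.

Lemma in_zspan2_zsum (F : Z -> R -> R -> R) lo hi : (forall i, (lo <= i <= hi)%Z -> in_zspan2 (F i)) ->
  in_zspan2 (fun x y => zsum lo hi (fun i => F i x y)).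
Proof.
  intros HF.
  exact (zsum_closed (fun f _ => in_zspan2 (fun x y => f (x, y))) (fun i p => F i (fst p) (snd p))
           (fun _ => 0) lo hi in_zspan2_zero (fun f f' _ _ => in_zspan2_plus _ _) HF).
Qed.

Lemma in_zspan2_prod F H : in_zspan1 lam a b g k F -> in_zspan1 mu c d h l H ->
  in_zspan2 (fun x y => F x * H y).
Proof.
  intros [c0 [cc HF]] [d0 [dd HH]].
  exists (c0 * d0), (fun i j => cc i * dd j), (fun i => cc i * d0), (fun j => c0 * dd j).
  intros x y [Hx Hy]. rewrite HF, HH by assumption. unfold zcomb.
  rewrite (zsum_ext _ _ (fun i => zsum _ _ (fun j => (cc i * dd j) * _))
     (fun i => zsum (- Z.of_nat l) (Z.of_nat h - 1)
                 (fun j => (cc i * zbspline lam b k i x) * (dd j * zbspline mu d l j y)))),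
    zsum_prod by (intros; apply zsum_ext; intros; ring).
  rewrite (zsum_ext _ _ (fun i => (cc i * d0) * _) (fun i => (cc i * zbspline lam b k i x) * d0)),
    (zsum_ext _ _ (fun j => (c0 * dd j) * _) (fun j => c0 * (dd j * zbspline mu d l j y))),
    zsum_scal_r, zsum_scal by (intros; ring).
  ring.
Qed.

Hypothesis Hlam : knots lam a b g k.
Hypothesis Hmu : knots mu c d h l.

Lemma in_S_in_zspan2 s : in_S lam mu a b c d g h k l s -> in_zspan2 s.
Proof.
  intros [coef Hs]. eapply in_zspan2_ext; [|exact Hs].
  apply (in_zspan2_zsum (fun i x y =>
    zsum _ _ (fun j => coef i j * bspline lam b k i x * bspline mu d l j y))).
  intros i Hi.
  apply (in_zspan2_zsum (fun j x y => coef i j * bspline lam b k i x * bspline mu d l j y)). intros j Hj.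
  apply (in_zspan2_ext (fun x y => coef i j * (bspline lam b k i x * bspline mu d l j y)));
    [|intros; ring].
  apply in_zspan2_scal, in_zspan2_prod; apply knots_bspline_in_zspan1; assumption.
Qed.

Lemma dint_const_plus_zcomb C al be ga :
  dint a b c d (fun x y => C + zcomb lam mu b d g h k l al be ga x y) = (b - a) * ((d - c) * C).
Proof.
  set (bex x := zsum (- Z.of_nat k) (Z.of_nat g - 1) (fun i => be i * zbspline lam b k i x)).
  apply (dint_is _ _ _ _ _ (fun x => (d - c) * C + (d - c) * bex x)).
  - intros x.
    apply (is_RInt_ext (fun y => C + (zsum (- Z.of_nat l) (Z.of_nat h - 1) (fun j =>
      (zsum (- Z.of_nat k) (Z.of_nat g - 1) (fun i => al i j * zbspline lam b k i x) + ga j)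
      * zbspline mu d l j y) + bex x))); [intros y _; rewrite zcomb_regroup; reflexivity|].
    replace ((d - c) * C + (d - c) * bex x) with (plus ((d - c) * C) (plus 0 ((d - c) * bex x)))
      by (unfold plus; simpl; ring).
    apply (is_RInt_plus (V := R_NormedModule)); [apply is_RInt_const_R|].
    apply (is_RInt_plus (V := R_NormedModule)); [apply (knots_is_RInt_zbspline_comb mu c d h l Hmu)|].
    apply is_RInt_const_R.
  - replace ((b - a) * ((d - c) * C)) with (plus ((b - a) * ((d - c) * C)) ((d - c) * 0))
      by (unfold plus; simpl; ring).
    apply (is_RInt_plus (V := R_NormedModule)); [apply is_RInt_const_R|].
    apply (is_RInt_scal (V := R_NormedModule)), (knots_is_RInt_zbspline_comb lam a b g k Hlam).
Qed.

Lemma in_Zsp_zcomb s : in_Zsp lam mu a b c d g h k l s ->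
  exists al be ga, forall x y, in_Omega a b c d x y -> s x y = zcomb lam mu b d g h k l al be ga x y.
Proof.
  intros [HS Hint]. destruct (in_S_in_zspan2 s HS) as [C [al [be [ga H]]]].
  exists al, be, ga.
  pose proof (knots_ends_lt lam a b g k Hlam). pose proof (knots_ends_lt mu c d h l Hmu).
  assert (HC : C = 0).
  { rewrite (dint_ext _ _ _ _ s (fun x y => C + zcomb lam mu b d g h k l al be ga x y)),
      dint_const_plus_zcomb in Hint by (lra || assumption).
    apply Rmult_integral in Hint as [E|E]; [lra|]. apply Rmult_integral in E as [E|E]; lra. }
  intros x y Hxy. rewrite H, HC by exact Hxy. ring.
Qed.

Lemma zcomb_indep al be ga :
  (forall x y, in_Omega a b c d x y -> zcomb lam mu b d g h k l al be ga x y = 0) ->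
  (forall i j, (- Z.of_nat k <= i <= Z.of_nat g - 1)%Z -> (- Z.of_nat l <= j <= Z.of_nat h - 1)%Z ->
     al i j = 0) /\
  (forall i, (- Z.of_nat k <= i <= Z.of_nat g - 1)%Z -> be i = 0) /\
  (forall j, (- Z.of_nat l <= j <= Z.of_nat h - 1)%Z -> ga j = 0).
Proof.
  intros H.
  assert (Hx : forall x, a <= x <= b ->
    zsum (- Z.of_nat k) (Z.of_nat g - 1) (fun i => be i * zbspline lam b k i x) = 0 /\
    forall j, (- Z.of_nat l <= j <= Z.of_nat h - 1)%Z ->
      zsum (- Z.of_nat k) (Z.of_nat g - 1) (fun i => al i j * zbspline lam b k i x) + ga j = 0).
  { intros x Hx. apply (knots_zbspline_indep_const mu c d h l Hmu). intros y Hy.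
    rewrite <- zcomb_regroup. apply H. split; assumption. }
  split; [|split].
  - intros i j Hi Hj.
    refine (proj2 (knots_zbspline_indep_const lam a b g k Hlam (fun i => al i j) (ga j) _) i Hi).
    intros x Hxab. apply (proj2 (Hx x Hxab) j Hj).
  - intros i Hi. refine (proj2 (knots_zbspline_indep_const lam a b g k Hlam be 0 _) i Hi).
    intros x Hxab. rewrite Rplus_0_r. apply (proj1 (Hx x Hxab)).
  - intros j Hj. refine (proj1 (knots_zbspline_indep_const lam a b g k Hlam (fun i => al i j) (ga j) _)).
    intros x Hxab. apply (proj2 (Hx x Hxab) j Hj).
Qed.

End TensorProduct.

Theorem theorem4 (a b c d : R) (g h k l : nat) (lam mu : Z -> R) :
  a < b -> c < d ->
  knots lam a b g k -> knots mu c d h l ->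
  (forall i j : Z,
     (- Z.of_nat k <= i <= Z.of_nat g - 1)%Z -> (- Z.of_nat l <= j <= Z.of_nat h - 1)%Z ->
     in_Zsp lam mu a b c d g h k l (fun x y => zbspline lam b k i x * zbspline mu d l j y)) /\
  (forall i : Z, (- Z.of_nat k <= i <= Z.of_nat g - 1)%Z ->
     in_Zsp lam mu a b c d g h k l (fun x _ => zbspline lam b k i x)) /\
  (forall j : Z, (- Z.of_nat l <= j <= Z.of_nat h - 1)%Z ->
     in_Zsp lam mu a b c d g h k l (fun _ y => zbspline mu d l j y)) /\
  (forall (al : Z -> Z -> R) (be ga : Z -> R),
     (forall x y, in_Omega a b c d x y -> zcomb lam mu b d g h k l al be ga x y = 0) ->
     (forall i j : Z,
        (- Z.of_nat k <= i <= Z.of_nat g - 1)%Z -> (- Z.of_nat l <= j <= Z.of_nat h - 1)%Z ->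
        al i j = 0) /\
     (forall i : Z, (- Z.of_nat k <= i <= Z.of_nat g - 1)%Z -> be i = 0) /\
     (forall j : Z, (- Z.of_nat l <= j <= Z.of_nat h - 1)%Z -> ga j = 0)) /\
  (forall s : R -> R -> R, in_Zsp lam mu a b c d g h k l s ->
     exists (al : Z -> Z -> R) (be ga : Z -> R),
       forall x y, in_Omega a b c d x y -> s x y = zcomb lam mu b d g h k l al be ga x y) /\
  ((g + k) * (h + l) + (g + k) + (h + l) = (g + k + 1) * (h + l + 1) - 1)%nat.
Proof.
  intros _ _ Hlam Hmu.
  pose proof (knots_is_RInt_zbspline lam a b g k Hlam) as Ilam.
  pose proof (knots_is_RInt_zbspline mu c d h l Hmu) as Imu.
  split; [|split; [|split; [|split; [|split]]]].
  - intros i j Hi Hj.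
    apply (in_Zsp_prod _ _ _ _ _ _ _ _ _ _ _ (zbspline lam b k i) (zbspline mu d l j) 0 0);
      [reflexivity | apply zbspline_in_S1, Hi | apply zbspline_in_S1, Hj
      | apply Ilam, Hi | apply Imu, Hj | ring].
  - intros i Hi.
    apply (in_Zsp_prod _ _ _ _ _ _ _ _ _ _ _ (zbspline lam b k i) (fun _ => 1) 0 ((d - c) * 1));
      [intros; ring | apply zbspline_in_S1, Hi | apply knots_one_in_S1, Hmu | apply Ilam, Hi
      | apply is_RInt_const_R | ring].
  - intros j Hj.
    apply (in_Zsp_prod _ _ _ _ _ _ _ _ _ _ _ (fun _ => 1) (zbspline mu d l j) ((b - a) * 1) 0);
      [intros; ring | apply knots_one_in_S1, Hlam | apply zbspline_in_S1, Hj
      | apply is_RInt_const_R | apply Imu, Hj | ring].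
  - apply zcomb_indep; assumption.
  - apply in_Zsp_zcomb; assumption.
  - nia.
Qed.
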